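(* Let $C$ be a subset of $Ob(CC(R,LM))$ closed under $ft$, and let $\le$ be a transitive relation on $C$ such that (1) $\Gamma\le\Gamma'$ implies $l(\Gamma)=l(\Gamma')$, and (2) for $\Gamma\in C$ and $F\in C$ with $ft(\Gamma)\le F$, one has $\sigma(\Gamma,F)\in C$ and $\Gamma\le\sigma(\Gamma,F)$. Then for $\Gamma\in C$ and $F\in C$ with $ft^i(\Gamma)\le F$ for some $i\ge1$, one has $\Gamma\le\sigma(\Gamma,F)$.
   Context: $[n]=\{1,\dots,n\}$; $R$ is a monad on Sets and $LM$ a left $R$-module with values in Sets. $Ob(CC(R,LM))$ is the set of finite sequences $(T_1,\dots,T_n)$, $n\ge0$, with $T_j\in LM([j-1])$; $l(T_1,\dots,T_n)=n$; $ft(T_1,\dots,T_n)=(T_1,\dots,T_{n-1})$ for $n\ge1$ and $ft()=()$. For $\Gamma=(T_1,\dots,T_{n+k})$ with $k>0$ and $\Gamma'=(T'_1,\dots,T'_n)$, $\sigma(\Gamma,\Gamma'):=(T'_1,\dots,T'_n,T_{n+1},\dots,T_{n+k})$ (defined only when $l(\Gamma)>l(\Gamma')$). *)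

From mathcomp Require Import all_boot.
Set Implicit Arguments. Unset Strict Implicit. Unset Printing Implicit Defensive.

Record monad := Monad {
  mon :> Type -> Type;
  ret : forall X, X -> mon X;
  bind : forall X Y, mon X -> (X -> mon Y) -> mon Y;
  bind_ret_l : forall X Y (x : X) (f : X -> mon Y), bind (ret x) f = f x;
  bind_ret_r : forall X (m : mon X), bind m (@ret X) = m;
  bind_assoc : forall X Y Z (m : mon X) (f : X -> mon Y) (g : Y -> mon Z),
      bind (bind m f) g = bind m (fun x => bind (f x) g) }.

Record lmodule (R : monad) := LModule {
  lm :> Type -> Type;
  lbind : forall X Y, lm X -> (X -> R Y) -> lm Y;
  lbind_ret : forall X (m : lm X), lbind m (@ret R X) = m;
  lbind_assoc : forall X Y Z (m : lm X) (f : X -> R Y) (g : Y -> R Z),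
      lbind (lbind m f) g = lbind m (fun x => bind (f x) g) }.

(* [n] = {1,...,n} is represented by the n-element type 'I_n.
   A raw sequence of types: entries are pairs (k, T) with T in LM([k]). *)
Definition rawseq (R : monad) (LM : lmodule R) := seq {k : nat & LM 'I_k}.

(* Membership in Ob(CC(R,LM)): the j-th entry (1-based) lies in LM([j-1]). *)
Definition isOb (R : monad) (LM : lmodule R) (G : rawseq LM) : Prop :=
  map (fun t => projT1 t) G = iota 0 (size G).

Definition l (R : monad) (LM : lmodule R) (G : rawseq LM) : nat := size G.

Definition ft (R : monad) (LM : lmodule R) (G : rawseq LM) : rawseq LM :=
  take (size G).-1 G.

(* sigma(G, G') = (T'_1..T'_n, T_{n+1}..T_{n+k}); meaningful only when l G > l G' *)
Definition sigma (R : monad) (LM : lmodule R) (G G' : rawseq LM) : rawseq LM :=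
  G' ++ drop (size G') G.

From mathcomp Require Import all_boot.
From mathcomp Require Import zify.

Set Implicit Arguments.
Unset Strict Implicit.
Unset Printing Implicit Defensive.

(* If l F < l (ft G), the induction hypothesis applied to ft G
   gives ft G <= sigma (ft G) F, and one application of (2) to G yields
   G <= sigma G (sigma (ft G) F) = sigma G F.  Otherwise l F = l (ft G), which is
   compatible with l F = l (ft^(i+1) (ft G)) only when ft G is empty; then
   ft^(i+1) (ft G) = ft G and (2) applies directly. *)

Lemma cat_drop_take_drop (T : Type) (s : seq T) m n :
  m <= n -> drop m (take n s) ++ drop n s = drop m s.
Proof.
move=> le_mn; rewrite -{1}(subnK le_mn) -take_drop.
by rewrite -[in RHS](cat_take_drop (n - m) (drop m s)) drop_drop subnK.
Qed.

Section FtSigma.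

Variables (R : monad) (LM : lmodule R).

Lemma size_ft (G : rawseq LM) : size (ft G) = (size G).-1.
Proof. by rewrite /ft size_take; case: (size G) => //= n; rewrite ltnSn. Qed.

Lemma size_iter_ft k (G : rawseq LM) : size (iter k (@ft R LM) G) = size G - k.
Proof. by elim: k => [|k IHk] /=; rewrite ?subn0 // size_ft IHk subnS. Qed.

Lemma iter_ft_nil k : iter k (@ft R LM) [::] = [::].
Proof. by elim: k => //= k ->. Qed.

Lemma size_sigma (G F : rawseq LM) :
  size F <= size G -> size (sigma G F) = size G.
Proof. by move=> leFG; rewrite /sigma size_cat size_drop subnKC. Qed.

Lemma sigma_sigma_ft (G F : rawseq LM) :
  size F <= size (ft G) -> sigma G (sigma (ft G) F) = sigma G F.
Proof.
move=> leF; rewrite /sigma size_sigma // -catA size_ft.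
by rewrite /ft cat_drop_take_drop // -size_ft.
Qed.

End FtSigma.

Section SigmaIter.

Variables (R : monad) (LM : lmodule R).
Variables (C : rawseq LM -> Prop) (le : rawseq LM -> rawseq LM -> Prop).
Hypothesis C_ft : forall G, C G -> C (ft G).
Hypothesis le_l : forall G G', C G -> C G' -> le G G' -> l G = l G'.
Hypothesis le_sigma : forall G F, C G -> C F -> le (ft G) F -> l F < l G ->
  C (sigma G F) /\ le G (sigma G F).

Lemma C_iter_ft k G : C G -> C (iter k (@ft R LM) G).
Proof. by move=> CG; elim: k => //= k; apply: C_ft. Qed.

Lemma ft_nil_of_le_iter_ft i G F : C G -> C F ->
  le (iter i.+1 (@ft R LM) G) F -> l G <= l F -> G = [::].
Proof.
move=> CG CF leGF; rewrite -(le_l (C_iter_ft _ CG) CF leGF) /l size_iter_ft.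
by move=> le_size; apply/size0nil; lia.
Qed.

Lemma le_sigma_iter i G F : C G -> C F ->
  le (iter i.+1 (@ft R LM) G) F -> l F < l G ->
  C (sigma G F) /\ le G (sigma G F).
Proof.
elim: i G F => [|i IHi] G F CG CF; first exact: le_sigma.
rewrite iterSr => leGF ltFG; have CftG := C_ft CG.
have [ltF_ft | le_ft_F] := ltnP (l F) (l (ft G)).
- have [Csig le_ft_sig] := IHi _ _ CftG CF leGF ltF_ft.
  have lt_sig : l (sigma (ft G) F) < l G.
    rewrite /l size_sigma; last exact: ltnW.
    by rewrite size_ft ltn_predL (leq_ltn_trans _ ltFG).
  rewrite -sigma_sigma_ft; last exact: ltnW.
  exact: le_sigma.
- have ftG0 := ft_nil_of_le_iter_ft CftG CF leGF le_ft_F.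
  by rewrite ftG0 iter_ft_nil -ftG0 in leGF; apply: le_sigma.
Qed.

End SigmaIter.

Theorem lemma6p7 (R : monad) (LM : lmodule R)
  (C : rawseq LM -> Prop) (le : rawseq LM -> rawseq LM -> Prop)
  (C_Ob : forall G, C G -> isOb G)
  (C_ft : forall G, C G -> C (ft G))
  (le_trans : forall G1 G2 G3, C G1 -> C G2 -> C G3 ->
      le G1 G2 -> le G2 G3 -> le G1 G3)
  (le_l : forall G G', C G -> C G' -> le G G' -> l G = l G')
  (le_sigma : forall G F, C G -> C F -> le (ft G) F -> l F < l G ->
      C (sigma G F) /\ le G (sigma G F)) :
  forall (G F : rawseq LM) (i : nat), C G -> C F -> 1 <= i ->
    le (iter i (@ft R LM) G) F -> l F < l G -> le G (sigma G F).
Proof.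
move=> G F [|i] CG CF // _ leGF ltFG.
by case: (le_sigma_iter C_ft le_l le_sigma CG CF leGF ltFG).
Qed.
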